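(* Let $k\ge3$, $d$ a positive integer, $\alpha=d/k$, $\beta>0$, $\lambda\in(0,1)$, and let $\eta_0$ be a probability measure on $[0,1]$ with $\eta_0(\mathrm dx)=\eta_0(\mathrm d(1-x))$. For any literals $\underline{\mathtt L}_a\in\{0,1\}^k$, $0\le a\le d$, the quantity $$\mathcal P\big(\delta_{\eta_0},\lambda;(\underline{\mathtt L}_a)_{0\le a\le d}\big):=\lambda^{-1}\log\mathbb E'\Big(\sum_{x\in\{0,1\}}\prod_{a=1}^d u_{a,\underline{\mathtt L}_a}(x)\Big)^{\lambda}-(k-1)\alpha\lambda^{-1}\log\mathbb E'\big(u_{\underline{\mathtt L}_0}\big)^{\lambda}$$ does not depend on $(\underline{\mathtt L}_a)_{0\le a\le d}$. Consequently, its average over $(\underline{\mathtt L}_a)_{0\le a\le d}$ i.i.d. uniform on $\{0,1\}^k$ equals its value at $\underline{\mathtt L}_a\equiv\underline 0$.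
   Context: Identify a probability measure $\rho$ on $\{0,1\}$ with $\rho(1)\in[0,1]$. Let $(\rho_{a,j})_{a\ge0,j\ge1}$ be i.i.d. samples from $\eta_0$, and $\mathbb E'$ the expectation over them. For $\underline{\mathtt L}\in\{0,1\}^k$ and $\underline x\in\{0,1\}^k$, $\theta_{\underline{\mathtt L}}(\underline x)=(1-e^{-\beta})\big(\prod_{i=1}^k(\mathtt L_i\oplus x_i)+\prod_{i=1}^k(\mathtt L_i\oplus x_i\oplus1)\big)$. For $x\in\{0,1\}$: $u_{a,\underline{\mathtt L}}(x)=\sum_{\underline x\in\{0,1\}^k}\mathbb 1\{x_1=x\}(1-\theta_{\underline{\mathtt L}}(\underline x))\prod_{j=2}^k\rho_{a,j}(x_j)$ and $u_{\underline{\mathtt L}}=\sum_{\underline x\in\{0,1\}^k}(1-\theta_{\underline{\mathtt L}}(\underline x))\prod_{j=1}^k\rho_{0,j}(x_j)$. *)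

From HB Require Import structures.
From mathcomp Require Import all_boot all_order all_algebra.
From mathcomp Require Import all_classical all_reals all_analysis.
Set Implicit Arguments. Unset Strict Implicit. Unset Printing Implicit Defensive.
Import Order.TTheory GRing.Theory Num.Theory.
Local Open Scope ring_scope.

Section Defs.
Variable R : realType.

(* A probability measure rho on {0,1} identified with rho(1) = p in [0,1]. *)
Definition nae_rho (p : R) (b : bool) : R := if b then p else 1 - p.

Definition nae_theta (k : nat) (beta : R) (L x : {ffun 'I_k -> bool}) : R :=
  (1 - expR (- beta)) *
  ((\prod_(i < k) ((L i (+) x i : bool) : nat)%:R) +
   (\prod_(i < k) ((L i (+) x i (+) true : bool) : nat)%:R)).

(* u_{a,L}(x): the first coordinate (index 0 in 'I_k, index 1 in the paper)
   is fixed to x; rho_{a,j} for the other j are the given reals in [0,1]. *)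
Definition nae_ua (k : nat) (beta : R) (L : {ffun 'I_k -> bool})
    (rho_a : 'I_k -> R) (x : bool) : R :=
  \sum_(xs : {ffun 'I_k -> bool} | [forall j : 'I_k, (val j == 0%N) ==> (xs j == x)])
    (1 - nae_theta beta L xs) * \prod_(j < k | val j != 0%N) nae_rho (rho_a j) (xs j).

Definition nae_u0 (k : nat) (beta : R) (L : {ffun 'I_k -> bool})
    (rho_0 : 'I_k -> R) : R :=
  \sum_(xs : {ffun 'I_k -> bool})
    (1 - nae_theta beta L xs) * \prod_(j < k) nae_rho (rho_0 j) (xs j).

(* Expectation of F(r_0, ..., r_{n-1}) where r_0, ..., r_{n-1} are i.i.d.
   with law P: the iterated integral (= integral against the product measure
   P^{\otimes n} for nonnegative measurable F, by Tonelli). *)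
Fixpoint nae_iidE (P : probability R R) (n : nat) (F : (nat -> R) -> R) : \bar R :=
  match n with
  | 0%N => (F (fun _ => 0))%:E
  | n'.+1 => (\int[P]_x
       nae_iidE P n' (fun r => F (fun i => if i == n' then x else r i)))%E
  end.

Definition nae_smp (k : nat) (r : nat -> R) (a j : nat) : R := r (a * k + j)%N.

Definition nae_P (k d : nat) (beta lambda : R) (eta0 : probability R R)
    (L : 'I_d.+1 -> {ffun 'I_k -> bool}) : R :=
  let n := (d.+1 * k)%N in
  let alpha := (d%:R / k%:R : R) in
  lambda^-1 * ln (fine (nae_iidE eta0 n (fun r =>
      (\sum_(x : bool) \prod_(a < d.+1 | val a != 0%N)
          nae_ua beta (L a) (fun j : 'I_k => nae_smp k r a j) x) `^ lambda)))
  - (k%:R - 1) * alpha * lambda^-1 *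
    ln (fine (nae_iidE eta0 n (fun r =>
      (nae_u0 beta (L ord0) (fun j : 'I_k => nae_smp k r 0 j)) `^ lambda))).

End Defs.
Arguments nae_P {R} k d beta lambda eta0 L.

(* Since eta0 is invariant under x |-> 1 - x, reflecting any set of the i.i.d.
   samples leaves every expectation unchanged.  Flipping literals is a gauge
   symmetry: negating the spins x_j where L_j differs from a reference bit
   turns theta_L into theta_0, and turns the weight rho_j(x_j) into the weight
   of the reflected sample 1 - rho_j.  So each u_{a,L_a} (resp. u_{L_0}) is
   u_{a,0} (resp. u_0) evaluated at partially reflected samples, and P takes
   the same value for all literals; the average is then trivial. *)

From HB Require Import structures.
From mathcomp Require Import all_boot all_order all_algebra.
From mathcomp Require Import all_classical all_reals all_analysis.
From mathcomp Require Import measurable_realfun.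
Set Implicit Arguments. Unset Strict Implicit. Unset Printing Implicit Defensive.
Import Order.TTheory GRing.Theory Num.Theory.
Local Open Scope classical_set_scope.
Local Open Scope ring_scope.

Section integral_involution.
Context d (T : measurableType d) (R : realType).
Variables (mu : {measure set T -> \bar R}) (phi : T -> T).
Hypotheses (mphi : measurable_fun setT phi) (phiK : involutive phi)
  (mu_phi : forall A, measurable A -> mu (phi @^-1` A) = mu A).

Import HBSimple HBNNSimple.

Section nnsfun_comp.
Variable h : {nnsfun T >-> R}.

Definition nnsfun_comp := h \o phi.

Let mcomp : measurable_fun setT nnsfun_comp.
Proof. exact: measurableT_comp. Qed.

Let fin_comp : finite_set (range nnsfun_comp).
Proof. by apply: sub_finite_set (fimfunP h) => _ [x _ <-]; exists (phi x). Qed.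

Let ge0_comp x : 0 <= nnsfun_comp x.
Proof. exact: fun_ge0. Qed.

HB.instance Definition _ := isMeasurableFun.Build _ _ _ _ nnsfun_comp mcomp.
HB.instance Definition _ := FiniteImage.Build _ _ nnsfun_comp fin_comp.
HB.instance Definition _ := isNonNegFun.Build _ _ nnsfun_comp ge0_comp.

Lemma sintegral_comp : sintegral mu nnsfun_comp = sintegral mu h.
Proof.
apply: eq_fsbigr => r _; congr (_ * _)%E.
exact: (mu_phi (measurable_funPTI h (measurable_set1 r))).
Qed.

End nnsfun_comp.

Local Open Scope ereal_scope.

(* [\int] is built from this supremum; composing with [phi] permutes the simple
   functions below [g] and preserves their integrals, so no measurability of
   the integrand is needed. *)
Let simple_sup (g : T -> \bar R) := ereal_sup [set sintegral mu h |
  h in [set h : {nnsfun T >-> R} | forall x, (h x)%:E <= g x]].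

Let simple_sup_le_comp g : simple_sup g <= simple_sup (g \o phi).
Proof.
apply: ge_ereal_sup => _ [h hg <-]; apply: ereal_sup_ubound.
exists (nnsfun_comp h : {nnsfun T >-> R}); last exact: sintegral_comp.
by move=> x; exact: hg.
Qed.

Let simple_sup_comp g : simple_sup (g \o phi) = simple_sup g.
Proof.
apply/le_anti/andP; split; last exact: simple_sup_le_comp.
have phiphi : (g \o phi) \o phi = g by apply/funext => x /=; rewrite phiK.
by have := simple_sup_le_comp (g \o phi); rewrite phiphi.
Qed.

Lemma integral_comp_involution (f : T -> \bar R) :
  \int[mu]_x f (phi x) = \int[mu]_x f x.
Proof.
rewrite /integral !patch_setT.
have -> : (fun x => f (phi x))^\+ = f^\+ \o phi.
  by apply/funext => x; rewrite /= !funeposE.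
have -> : (fun x => f (phi x))^\- = f^\- \o phi.
  by apply/funext => x; rewrite /= !funenegE.
by congr (_ - _); [exact: (simple_sup_comp f^\+)|exact: (simple_sup_comp f^\-)].
Qed.

End integral_involution.

Section iid_reflection.
Variables (R : realType) (P : probability R R) (phi : R -> R).
Hypothesis integral_phi :
  forall f : R -> \bar R, (\int[P]_x f (phi x) = \int[P]_x f x)%E.

(* Coordinates [i >= n] are not integrated by [nae_iidE P n] (they are frozen
   to [0]), so they must not be reflected. *)
Definition reflect_coords (s : pred nat) (n : nat) (r : nat -> R) (i : nat) :=
  if s i && (i < n)%N then phi (r i) else r i.

Lemma nae_iidE_reflect n s (F : (nat -> R) -> R) :
  nae_iidE P n (F \o reflect_coords s n) = nae_iidE P n F.
Proof.
elim: n F => [|n IHn] F /=.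
  by congr (F _)%:E; apply/funext => i; rewrite /reflect_coords andbF.
pose Fx x r := F (fun i => if i == n then x else r i).
have reflectS x r : reflect_coords s n.+1 (fun i => if i == n then x else r i)
    = fun i => if i == n then (if s n then phi x else x)
               else reflect_coords s n r i.
  apply/funext => i; rewrite /reflect_coords ltnS leq_eqVlt.
  by case: eqP => [->|_]; rewrite ?ltnSn ?andbT //; case: (s n).
transitivity (\int[P]_x nae_iidE P n (Fx (if s n then phi x else x)))%E.
  apply: eq_integral => x _; rewrite -[RHS]IHn; apply: congr1.
  by apply/funext => r /=; rewrite reflectS.
by case: (s n); first exact: (integral_phi (fun x => nae_iidE P n (Fx x))).
Qed.

End iid_reflection.

Section nae_gauge.
Variables (R : realType) (k' : nat) (beta : R).
Local Notation k := k'.+1.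
Implicit Types (L xs : {ffun 'I_k -> bool}) (c : bool).

Definition gauge L c xs : {ffun 'I_k -> bool} := [ffun i => L i (+) xs i (+) c].

Lemma gaugeK L c : involutive (gauge L c).
Proof.
by move=> xs; apply/ffunP => i; rewrite !ffunE; case: (L i); case: (xs i); case: c.
Qed.

Lemma gauge_ord0 L xs : gauge L (L ord0) xs ord0 = xs ord0.
Proof. by rewrite ffunE; case: (L ord0); case: (xs ord0). Qed.

Lemma nae_theta_gauge L c xs :
  nae_theta beta L (gauge L c xs) = nae_theta beta [ffun=> false] xs.
Proof.
have flipL i : L i (+) gauge L c xs i = xs i (+) c.
  by rewrite ffunE; case: (L i); case: (xs i); case: c.
rewrite /nae_theta; congr (_ * _).
under eq_bigr do rewrite flipL.
under [X in _ + X]eq_bigr do rewrite flipL.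
under [in RHS]eq_bigr do rewrite ffunE addFb.
under [X in _ = _ + X]eq_bigr do rewrite ffunE addFb.
case: c {flipL}; last by congr (_ + _); apply: eq_bigr => i _; rewrite addbF.
by rewrite addrC; congr (_ + _); apply: eq_bigr => i _; rewrite -addbA addbb addbF.
Qed.

Lemma nae_rho_addb (p : R) c b :
  nae_rho p (c (+) b) = nae_rho (if c then 1 - p else p) b.
Proof. by case: c; case: b; rewrite /nae_rho //= subKr. Qed.

Lemma forall_ord0_imply (P : 'I_k -> bool) :
  [forall j : 'I_k, (val j == 0%N) ==> P j] = P ord0.
Proof.
apply/forallP/idP => [/(_ ord0)//|P0 j]; apply/implyP => /eqP j0.
by rewrite (_ : j = ord0) //; exact: val_inj.
Qed.

Lemma nae_ua_gauge L (rho : 'I_k -> R) x :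
  nae_ua beta L rho x =
  nae_ua beta [ffun=> false]
    (fun j => if L j (+) L ord0 then 1 - rho j else rho j) x.
Proof.
rewrite /nae_ua (reindex_inj (can_inj (gaugeK L (L ord0)))) /=.
apply: eq_big => [xs|xs _]; first by rewrite !forall_ord0_imply gauge_ord0.
rewrite nae_theta_gauge; congr (_ * _); apply: eq_bigr => j _.
by rewrite -nae_rho_addb ffunE addbAC.
Qed.

Lemma nae_u0_gauge L (rho : 'I_k -> R) :
  nae_u0 beta L rho =
  nae_u0 beta [ffun=> false] (fun j => if L j then 1 - rho j else rho j).
Proof.
rewrite /nae_u0 (reindex_inj (can_inj (gaugeK L false))) /=.
apply: eq_bigr => xs _; rewrite nae_theta_gauge; congr (_ * _).
by apply: eq_bigr => j _; rewrite -nae_rho_addb ffunE addbF.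
Qed.

End nae_gauge.

Section nae_P_gauge.
Variables (R : realType) (eta0 : probability R R) (k' d : nat) (beta lambda : R).
Local Notation k := k'.+1.
Local Notation n := (d.+1 * k)%N.
Hypothesis eta0_reflect :
  forall f : R -> \bar R, (\int[eta0]_x f (1 - x)%R = \int[eta0]_x f x)%E.

Lemma sample_index_lt (a : 'I_d.+1) (j : 'I_k) : (a * k + j < n)%N.
Proof.
apply: (@leq_trans (a.+1 * k)); first by rewrite mulSnr ltn_add2l.
by rewrite leq_mul2r ltn_ord orbT.
Qed.

Lemma sample_indexK (a j : nat) :
  (j < k)%N -> ((a * k + j) %/ k = a)%N /\ ((a * k + j) %% k = j)%N.
Proof.
move=> jk; split; first by rewrite divnMDl // divn_small // addn0.
by rewrite modnMDl modn_small.
Qed.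

Lemma nae_smp_reflect s r (a : 'I_d.+1) (j : 'I_k) :
  nae_smp k (reflect_coords (fun x : R => 1 - x) s n r) a j
  = if s (a * k + j)%N then 1 - nae_smp k r a j else nae_smp k r a j.
Proof. by rewrite /nae_smp /reflect_coords sample_index_lt andbT. Qed.

Lemma nae_iidE_ua_gauge (L : 'I_d.+1 -> {ffun 'I_k -> bool}) (G : R -> R) :
  nae_iidE eta0 n (fun r => G (\sum_x \prod_(a < d.+1 | val a != 0%N)
      nae_ua beta (L a) (fun j : 'I_k => nae_smp k r a j) x)) =
  nae_iidE eta0 n (fun r => G (\sum_x \prod_(a < d.+1 | val a != 0%N)
      nae_ua beta [ffun=> false] (fun j : 'I_k => nae_smp k r a j) x)).
Proof.
pose s i :=
  let a : 'I_d.+1 := inord (i %/ k) in L a (inord (i %% k)) (+) L a ord0.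
rewrite -[RHS](nae_iidE_reflect eta0_reflect _ s).
apply: congr1; apply/funext => r /=.
congr G; apply: eq_bigr => x _; apply: eq_bigr => a _.
rewrite nae_ua_gauge; congr nae_ua; apply/funext => j.
rewrite nae_smp_reflect /s /=.
have [-> ->] := sample_indexK a (ltn_ord j).
by rewrite !inord_val.
Qed.

Lemma nae_iidE_u0_gauge (L : {ffun 'I_k -> bool}) (G : R -> R) :
  nae_iidE eta0 n (fun r =>
    G (nae_u0 beta L (fun j : 'I_k => nae_smp k r 0 j))) =
  nae_iidE eta0 n (fun r =>
    G (nae_u0 beta [ffun=> false] (fun j : 'I_k => nae_smp k r 0 j))).
Proof.
pose s i := ((i %/ k == 0) && L (inord (i %% k)))%N.
rewrite -[RHS](nae_iidE_reflect eta0_reflect _ s).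
apply: congr1; apply/funext => r /=.
congr G; rewrite nae_u0_gauge; congr nae_u0; apply/funext => j.
rewrite (nae_smp_reflect _ _ ord0) /s.
have [-> ->] := sample_indexK 0 (ltn_ord j).
by rewrite inord_val.
Qed.

Lemma nae_P_gauge (L : 'I_d.+1 -> {ffun 'I_k -> bool}) :
  nae_P k d beta lambda eta0 L =
  nae_P k d beta lambda eta0 (fun _ => [ffun=> false]).
Proof.
rewrite /nae_P (nae_iidE_ua_gauge L (fun t => t `^ lambda)).
by rewrite (nae_iidE_u0_gauge (L ord0) (fun t => t `^ lambda)).
Qed.

End nae_P_gauge.

Theorem lemma2p3 (R : realType) (k d : nat) (beta lambda : R)
    (eta0 : probability R R) :
  (3 <= k)%N -> (0 < d)%N -> 0 < beta -> 0 < lambda < 1 ->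
  eta0 `[0, 1]%classic = 1%E ->
  (forall A : set R, measurable A ->
     eta0 ((fun x : R => 1 - x) @^-1` A) = eta0 A) ->
  (forall L L' : 'I_d.+1 -> {ffun 'I_k -> bool},
     nae_P k d beta lambda eta0 L = nae_P k d beta lambda eta0 L') /\
  (2 ^+ (k * d.+1))^-1 *
    \sum_(L : {ffun 'I_d.+1 -> {ffun 'I_k -> bool}}) nae_P k d beta lambda eta0 L
  = nae_P k d beta lambda eta0 (fun _ => [ffun _ => false]).
Proof.
(* Besides k > 0, only the reflection symmetry of eta0 is used. *)
case: k => [//|k'] _ _ _ _ _ eta0_sym.
have eta0_reflect f : (\int[eta0]_x f (1 - x)%R = \int[eta0]_x f x)%E.
  apply: (@integral_comp_involution _ _ _ eta0 (fun x : R => 1 - x)) => //.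
    exact: measurable_funB.
  by move=> x; rewrite subKr.
have gauge0 := nae_P_gauge (k' := k') (d := d) beta lambda eta0_reflect.
split=> [L L'|]; first by rewrite gauge0 [RHS]gauge0.
under eq_bigr do rewrite gauge0.
rewrite sumr_const card_ffun card_ffun card_bool !card_ord.
by rewrite -expnM -[X in _ * X]mulr_natl natrX mulrA mulVf ?mul1r // expf_neq0.
Qed.
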